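(* Starting from any game state $G$, all game paths starting at $G$ that follow the Split-First Strategy have the same length.
   Context: Fibonacci numbers are indexed by $F_1=1$, $F_2=2$, $F_{i+1}=F_i+F_{i-1}$. A game state is a finite multiset of Fibonacci numbers (tracked by index). The legal moves are: $C_1$: replace $F_1,F_1$ by $F_2$; for $i\ge 2$, $C_i$: replace $F_{i-1},F_i$ by $F_{i+1}$ (a ''combining move''); $S_2$: replace $F_2,F_2$ by $F_1,F_3$; for $i\ge 3$, $S_i$: replace $F_i,F_i$ by $F_{i-2},F_{i+1}$ (a ''splitting move''). Here $C_1$ is grouped with the splitting moves, and ''combining move'' means $C_i$ with $i\ge 2$. Every sequence of legal moves is finite. A game path from a state $G$ is a sequence of legal moves starting at $G$ and continuing until no legal move is available; its length is its number of moves. A game path follows the Split-First Strategy if at each state along it: whenever some splitting move or $C_1$ is available, the move taken is one of those (any choice); otherwise the move taken is the combining move $C_i$ ($i\ge 2$) with the smallest index $i$ among those available. *)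

From mathcomp Require Import all_boot.
Set Implicit Arguments. Unset Strict Implicit. Unset Printing Implicit Defensive.

(* A game state: multiplicity of F_i for each index i >= 1 (index 0 unused). *)
Definition state := nat -> nat.

Definition valid_state (G : state) : Prop :=
  G 0 = 0 /\ exists N, forall i, N < i -> G i = 0.

Definition addk (j d : nat) (G : state) : state :=
  fun k => if k == j then G k + d else G k.
Definition subk (j d : nat) (G : state) : state :=
  fun k => if k == j then G k - d else G k.

(* Moves: C1 = C_1 ; Comb i = C_i (i >= 2) ; Split i = S_i (i >= 2). *)
Inductive move := C1 | Comb of nat | Split of nat.

Definition legal (m : move) (G : state) : bool :=
  match m with
  | C1 => 2 <= G 1
  | Comb i => (2 <= i) && (1 <= G i.-1) && (1 <= G i)
  | Split i => (2 <= i) && (2 <= G i)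
  end.

Definition apply_move (m : move) (G : state) : state :=
  match m with
  | C1 => addk 2 1 (subk 1 2 G)
  | Comb i => addk i.+1 1 (subk i 1 (subk i.-1 1 G))
  | Split i =>
      if i == 2 then addk 3 1 (addk 1 1 (subk 2 2 G))
      else addk i.+1 1 (addk (i - 2) 1 (subk i 2 G))
  end.

Definition is_splitting (m : move) : bool :=
  match m with C1 | Split _ => true | Comb _ => false end.

Definition terminal (G : state) : Prop := forall m, ~~ legal m G.

Fixpoint game_path (G : state) (ms : seq move) : Prop :=
  match ms with
  | [::] => terminal G
  | m :: ms' => legal m G /\ game_path (apply_move m G) ms'
  end.

Definition split_first_choice (G : state) (m : move) : Prop :=
  ((exists m', is_splitting m' && legal m' G) -> is_splitting m) /\
  (~ (exists m', is_splitting m' && legal m' G) ->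
     exists i, m = Comb i /\ forall j, legal (Comb j) G -> i <= j).

Fixpoint split_first_path (G : state) (ms : seq move) : Prop :=
  match ms with
  | [::] => terminal G
  | m :: ms' => [/\ legal m G, split_first_choice G m &
                   split_first_path (apply_move m G) ms']
  end.

From mathcomp Require Import all_boot zify.
From Stdlib Require Import FunctionalExtensionality.
Set Implicit Arguments.
Unset Strict Implicit.

(* Proof idea: a Newman-style diamond argument on game paths.
   1. Two distinct legal splitting moves (S_i or C_1) at the same state
      commute: each stays legal after the other, and applying them in either
      order gives the same state.
   2. Under the Split-First Strategy the combining move is forced (least
      index), so two distinct admissible choices at a state must both be
      splitting moves.
   3. Hence, if some Split-First path from G has length n+1 and m is any
      admissible first move at G, then some Split-First path from the state
      after m has length n (induction on the path, closing each diamond).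
   4. The theorem follows by induction on one of the two paths: moving both
      paths to a common first move with 3 and applying the induction
      hypothesis. *)

(* Pointwise arithmetic on the updated multiplicities: split on every
   comparison of index variables and finish by linear arithmetic, after
   transporting each index equation along the state G. *)
Ltac index_arith G :=
  rewrite /addk /subk /=; repeat (let E := fresh "E" in case: eqP => /= E);
  repeat match goal with H : @eq nat ?a ?b |- _ => generalize (f_equal G H); revert H end;
  intros; lia.

Lemma move_eq_dec (a b : move) : {a = b} + {a <> b}.
Proof. by decide equality; apply: PeanoNat.Nat.eq_dec. Qed.

(* A legal splitting move b stays legal after a distinct splitting move a:
   a only removes copies of its own index, which differs from b's. *)
Lemma splitting_legal_after a b G : is_splitting a -> is_splitting b -> a <> b ->
  legal a G -> legal b G -> legal b (apply_move a G).
Proof.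
case: a => [|i|i] //; case: b => [|j|j] //= _ _ a_neq_b.
- move=> _ /andP[j_ge2 Gj]; rewrite j_ge2 /=; move: Gj; index_arith G.
- move=> /andP[i_ge2 _] G1; move: G1; case: (i =P 2) => ?; index_arith G.
- move=> /andP[i_ge2 _] /andP[j_ge2 Gj]; rewrite j_ge2 /=.
  have : i <> j by move=> E; apply: a_neq_b; rewrite E.
  move: Gj; case: (i =P 2) => ?; index_arith G.
Qed.

Lemma splitting_moves_commute a b G : is_splitting a -> is_splitting b -> a <> b ->
  legal a G -> legal b G ->
  apply_move b (apply_move a G) = apply_move a (apply_move b G).
Proof.
case: a => [|i|i] //; case: b => [|j|j] //= _ _ a_neq_b La Lb;
  apply: functional_extensionality => k; move: La Lb.
- move=> G1 /andP[_ Gj]; move: G1 Gj; case: (j =P 2) => ?; index_arith G.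
- move=> /andP[_ Gi] G1; move: G1 Gi; case: (i =P 2) => ?; index_arith G.
- move=> /andP[_ Gi] /andP[_ Gj].
  have : i <> j by move=> E; apply: a_neq_b; rewrite E.
  move: Gi Gj; case: (i =P 2) => ?; case: (j =P 2) => ?; index_arith G.
Qed.

Lemma splitting_is_split_first_choice G m :
  is_splitting m -> legal m G -> split_first_choice G m.
Proof.
move=> Sm Lm; split=> // no_split; case: no_split.
by exists m; rewrite Sm Lm.
Qed.

Lemma combining_choice_no_split G m : split_first_choice G m ->
  ~~ is_splitting m -> ~ (exists m', is_splitting m' && legal m' G).
Proof. by move=> [split_first _] /negP not_split /split_first. Qed.

(* When no splitting move is legal, the Split-First choice is unique: it is
   the legal combining move of least index. *)
Lemma combining_choice_unique G m1 m2 :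
  ~ (exists m', is_splitting m' && legal m' G) -> legal m1 G -> legal m2 G ->
  split_first_choice G m1 -> split_first_choice G m2 -> m1 = m2.
Proof.
move=> no_split L1 L2 [_ C1] [_ C2].
have [i [E1 least_i]] := C1 no_split; have [j [E2 least_j]] := C2 no_split.
subst m1 m2; have := least_i j L2; have := least_j i L1.
by move=> j_le_i i_le_j; have -> : i = j by lia.
Qed.

Lemma distinct_choices_are_splitting G m1 m2 : legal m1 G -> legal m2 G ->
  split_first_choice G m1 -> split_first_choice G m2 -> m1 <> m2 ->
  is_splitting m1 /\ is_splitting m2.
Proof.
move=> L1 L2 C1 C2 m1_neq_m2.
case S1: (is_splitting m1); case S2: (is_splitting m2) => //; exfalso;
  apply: m1_neq_m2; apply: (combining_choice_unique _ L1 L2 C1 C2).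
- by apply: (combining_choice_no_split C2); rewrite S2.
- by apply: (combining_choice_no_split C1); rewrite S1.
- by apply: (combining_choice_no_split C1); rewrite S1.
Qed.

Lemma split_first_path_nonempty G m ms :
  legal m G -> split_first_path G ms -> 0 < size ms.
Proof. by case: ms => //= Lm T; have := T m; rewrite Lm. Qed.

Lemma split_first_path_after_choice ms : forall G m,
  split_first_path G ms -> legal m G -> split_first_choice G m ->
  exists ms', split_first_path (apply_move m G) ms' /\ (size ms').+1 = size ms.
Proof.
elim: ms => [|m1 t IH] G m /=.
  by move=> T Lm; have := T m; rewrite Lm.
move=> [L1 C1 P1] Lm Cm.
case: (move_eq_dec m m1) => [->|m_neq_m1]; first by exists t.
have [S1 Sm] := distinct_choices_are_splitting L1 Lm C1 Cm (nesym m_neq_m1).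
have Lm_after := splitting_legal_after S1 Sm (nesym m_neq_m1) L1 Lm.
have L1_after := splitting_legal_after Sm S1 m_neq_m1 Lm L1.
have [p [Pp Sp]] :=
  IH _ _ P1 Lm_after (splitting_is_split_first_choice Sm Lm_after).
exists (m1 :: p); split; last by rewrite /= Sp.
split=> //; first exact: splitting_is_split_first_choice.
by rewrite (splitting_moves_commute Sm S1 m_neq_m1 Lm L1).
Qed.

Theorem lemma2p2 (G : state) (ms1 ms2 : seq move) :
  valid_state G ->
  split_first_path G ms1 -> split_first_path G ms2 ->
  size ms1 = size ms2.
Proof.
move=> _; elim: ms1 G ms2 => [|m1 t1 IH] G [|m2 t2] //.
- by move=> P1 [L2 _ _]; have := split_first_path_nonempty L2 P1.
- by move=> [L1 _ _] P2; have := split_first_path_nonempty L1 P2.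
move=> [L1 C1 P1] P2.
have [p [Pp Sp]] := split_first_path_after_choice P2 L1 C1.
by rewrite /= (IH _ _ P1 Pp) Sp.
Qed.
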